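(* Let $A$ be the set of cyclic Carlitz compositions. Then \[ \sum_{W\in A}x^{\mathrm{sum}(W)}=\frac{\sum_{i=1}^\infty\frac{x^i}{(1+x^i)^2}}{1-\sum_{i=1}^\infty\frac{x^i}{1+x^i}}+\sum_{i=1}^\infty\frac{x^{2i}}{1+x^i}. \]
   Context: A composition is a nonempty finite sequence $W=(c_1,\ldots,c_l)$ of positive integers, with $\mathrm{sum}(W)=c_1+\cdots+c_l$. It is a Carlitz composition if no two adjacent parts are equal, and a cyclic Carlitz composition if moreover, when $l\ge2$, its first and last parts are not equal (equivalently, every cyclic rotation of it has no two adjacent equal parts); compositions with a single part are included. *)

From mathcomp Require Import all_boot.

Set Implicit Arguments.
Unset Strict Implicit.

Definition is_composition (W : seq nat) : bool :=
  (W != [::]) && all (fun c => 0 < c) W.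

Definition csum (W : seq nat) : nat := sumn W.

Definition carlitz (W : seq nat) : bool :=
  sorted (fun a b => a != b) W.

(* Cyclic Carlitz composition: Carlitz, and if it has at least two parts,
   first and last parts differ. Single-part compositions are included. *)
Definition cyclic_carlitz (W : seq nat) : bool :=
  [&& is_composition W, carlitz W &
      (1 < size W) ==> (head 0 W != last 0 W)].

Fixpoint seqs_len (k m : nat) : seq (seq nat) :=
  match k with
  | 0 => [:: [::]]
  | k'.+1 => [seq a :: s | a <- iota 1 m, s <- seqs_len k' m]
  end.

(* The (duplicate-free) list of all compositions of n: a composition of n
   has at most n parts, each in {1,...,n}. *)
Definition compositions_of (n : nat) : seq (seq nat) :=
  undup [seq W <- flatten [seq seqs_len k n | k <- iota 1 n]
        | is_composition W && (csum W == n)].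

Definition cc_count (n : nat) : nat :=
  count cyclic_carlitz (compositions_of n).

From Stdlib Require Import Reals.
From Coquelicot Require Import Coquelicot.

Definition cc_gf_term (x : R) (n : nat) : R := (INR (cc_count n) * x ^ n)%R.

(* Let C be the generating function of nonempty Carlitz compositions, and B_a,
   D_a those of the compositions w (empty included only in B_a) for which a :: w
   is Carlitz, respectively Carlitz with last part different from a.  Sorting Carlitz compositions by whether
   they start with a gives (1 + x^a) B_a = 1 + C, sorting the w counted by B_a
   by whether a :: w ends with a gives (1 + x^a) D_a + 1 = B_a, and deleting
   the first part gives C = sum_a x^a B_a and
   sum_{W in A} x^sum(W) = sum_a x^a (1 + D_a).
   Hence 1 + C = 1 / (1 - sum_a x^a / (1 + x^a)), and substituting gives the
   formula.  There are at most 2^n compositions of n, so for |x| < 1/4 all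
   series converge absolutely and the double sums may be taken in either order. *)

From mathcomp Require Import all_boot zify.
Set Implicit Arguments. Unset Strict Implicit.

Definition pos_parts (w : seq nat) : bool := all (fun c => 0 < c) w.

Fixpoint comps_atmost (k n : nat) : seq (seq nat) :=
  if n == 0 then [:: [::]] else
  if k is k'.+1 then [seq a :: w | a <- iota 1 n, w <- comps_atmost k' (n - a)]
  else [::].

(* Unlike [compositions_of], this includes the empty composition of 0, which
   makes the first-part recursions below uniform. *)
Definition comps (n : nat) : seq (seq nat) := comps_atmost n n.

Lemma size_le_sumn w : pos_parts w -> size w <= sumn w.
Proof. by elim: w => //= a w IH /andP[a_gt0 /IH]; lia. Qed.

Lemma mem_comps_atmost k n w :
  (w \in comps_atmost k n) = [&& pos_parts w, sumn w == n & size w <= k].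
Proof.
elim: k n w => [|k IH] n w /=; case: eqP => [->|/eqP n_gt0].
- by rewrite inE; case: w => //= -[|a] w; rewrite ?andbF.
- by case: w => [|a w] /=; rewrite ?andbF // eq_sym (negbTE n_gt0).
- by rewrite inE; case: w => //= -[|a] w; rewrite ?andbF.
case: w => [|a v].
  by rewrite /= eq_sym (negbTE n_gt0); apply/negbTE/allpairsPdep => -[? [? []]].
apply/allpairsPdep/idP => [[b [u [b_in u_in [-> ->]]]]|].
  move: b_in u_in; rewrite mem_iota IH /= ltnS /pos_parts => b_n.
  by case/and3P=> -> /eqP su ->; rewrite andbT; apply/andP; split; lia.
rewrite /= ltnS => /and3P[/andP[a_gt0 pv] /eqP sv sz].
exists a, v; rewrite mem_iota IH pv sz andbT; split=> //; apply/andP; split; lia.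
Qed.

Lemma mem_comps n w : (w \in comps n) = pos_parts w && (sumn w == n).
Proof.
rewrite mem_comps_atmost; case: (boolP (pos_parts w)) => //= pw.
by case: eqP => //= sw; rewrite -sw size_le_sumn.
Qed.

Lemma uniq_comps_atmost k n : uniq (comps_atmost k n).
Proof.
elim: k n => [|k IH] n /=; case: (n == 0) => //.
apply: allpairs_uniq_dep => [|a _|]; [exact: iota_uniq|exact: IH|].
by move=> [a v] [b u] _ _ /= [-> ->].
Qed.

Lemma uniq_comps n : uniq (comps n).
Proof. exact: uniq_comps_atmost. Qed.

Lemma perm_comps_atmost k n : n <= k -> perm_eq (comps_atmost k n) (comps n).
Proof.
move=> le_nk; apply: uniq_perm; rewrite ?uniq_comps_atmost // => w.
rewrite mem_comps_atmost mem_comps; case: (boolP (pos_parts w)) => //= pw.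
by case: eqP => //= sw; rewrite (leq_trans (size_le_sumn pw)) ?sw.
Qed.

Lemma count_comps_cons (P : pred (seq nat)) n :
  count P (comps n.+1) =
  \sum_(a < n.+1) count (fun w => P (a.+1 :: w)) (comps (n - a)).
Proof.
have -> : comps n.+1 =
    [seq a :: w | a <- iota 1 n.+1, w <- comps_atmost n (n.+1 - a)] by [].
rewrite count_flatten -map_comp sumnE big_map -(addn0 1) iotaDl.
rewrite big_map (big_nth 0) size_iota big_mkord; apply: eq_bigr => a _.
rewrite nth_iota // add0n add1n /= count_map subSS.
by apply/permP/perm_comps_atmost; rewrite leq_subr.
Qed.

Lemma count_comps_rev (P : pred (seq nat)) n :
  count P (comps n) = count (fun w => P (rev w)) (comps n).
Proof.
rewrite -(count_map rev P); apply/permP/uniq_perm.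
- exact: uniq_comps.
- by rewrite (map_inj_uniq (can_inj revK)) uniq_comps.
have mem_rev w : (rev w \in comps n) = (w \in comps n).
  by rewrite !mem_comps /pos_parts all_rev sumn_rev.
move=> w; apply/idP/mapP => [w_in|[u u_in ->]]; last by rewrite mem_rev.
by exists (rev w); rewrite ?revK ?mem_rev.
Qed.

Lemma count_comps_rcons (P : pred (seq nat)) n :
  count P (comps n.+1) =
  \sum_(a < n.+1) count (fun w => P (rcons w a.+1)) (comps (n - a)).
Proof.
rewrite count_comps_rev count_comps_cons; apply: eq_bigr => a _.
by rewrite count_comps_rev; apply: eq_count => w /=; rewrite rev_cons revK.
Qed.

Lemma size_comps n : size (comps n) <= 2 ^ n.
Proof.
elim/ltn_ind: n => -[|n] IH //.
have geom k : \sum_(a < k) 2 ^ (k - a.+1) < 2 ^ k.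
  elim: k => [|k IHk]; rewrite ?big_ord0 // big_ord_recl subn1 expnS.
  under eq_bigr do rewrite lift0 subSS.
  by rewrite mul2n -addnn ltn_add2l.
rewrite -count_predT count_comps_cons; apply: ltnW; apply: leq_ltn_trans (geom n.+1).
by apply: leq_sum => a _; rewrite count_predT subSS IH // ltnS leq_subr.
Qed.

Lemma count_comps_le (P : pred (seq nat)) n : count P (comps n) <= 2 ^ n.
Proof. exact: leq_trans (count_size _ _) (size_comps n). Qed.

Local Notation neq := (fun a b : nat => a != b).

Definition ncarlitz n := count (fun w => (w != [::]) && sorted neq w) (comps n).
Definition ncarlitz_after a n := count (path neq a) (comps n).
Definition ncyclic_after a n :=
  count (fun w => path neq a w && (last a w != a)) (comps n).

Lemma big_ord_pred1 m k (F : nat -> nat) :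
  \sum_(b < m | b == k :> nat) F b = if k < m then F k else 0.
Proof.
case: ltnP => [k_lt_m|le_m_k]; first exact: (big_pred1 (Ordinal k_lt_m)).
by rewrite big_pred0 // => b; apply/negbTE; rewrite neq_ltn (leq_trans _ le_m_k).
Qed.

Lemma ncarlitz_first_part m : ncarlitz m = \sum_(b < m) ncarlitz_after b.+1 (m - b.+1).
Proof. by case: m => [|m]; rewrite ?big_ord0 // /ncarlitz count_comps_cons. Qed.

Lemma ncarlitz_after_rec a m : 0 < a ->
  ncarlitz_after a m + (if a <= m then ncarlitz_after a (m - a) else 0) =
  (m == 0) + ncarlitz m.
Proof.
case: a => // k _; case: m => [|n] //.
rewrite ncarlitz_first_part (bigID (fun b : 'I_n.+1 => b == k :> nat)) /=.
rewrite (big_ord_pred1 _ _ (fun b => ncarlitz_after b.+1 (n.+1 - b.+1))).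
rewrite add0n addnC; congr (_ + _).
rewrite /ncarlitz_after count_comps_cons [RHS]big_mkcond; apply: eq_bigr => b _ /=.
by rewrite eqSS eq_sym; case: eqP => _; [exact: count_pred0|].
Qed.

Lemma count_split T (p q : pred T) s :
  count p s = count (predI p q) s + count (predI p (predC q)) s.
Proof. by elim: s => //= x s ->; case: (p x); case: (q x) => /=; lia. Qed.

Lemma ncyclic_after_rec a m : 0 < a ->
  ncyclic_after a m + (if a <= m then ncyclic_after a (m - a) else 0) + (m == 0) =
  ncarlitz_after a m.
Proof.
case: a => // k _.
rewrite /ncarlitz_after (count_split _ (fun w => last k.+1 w != k.+1)) -addnA.
congr (_ + _); case: m => [|n]; first by rewrite /= eqxx.
rewrite addn0 count_comps_rcons (eq_bigr (fun b : 'I_n.+1 =>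
  if b == k :> nat then ncyclic_after k.+1 (n - b) else 0)).
  by rewrite -big_mkcond (big_ord_pred1 _ _ (fun b => ncyclic_after k.+1 (n - b))).
move=> b _ /=; case: eqP => [->|ne].
  by apply: eq_count => w; rewrite /= rcons_path last_rcons eqxx /= andbT.
rewrite -(count_pred0 (comps (n - b))); apply: eq_count => w.
by rewrite /= last_rcons negbK eqSS (introF eqP ne) andbF.
Qed.

Lemma mem_seqs_len k m s :
  (s \in seqs_len k m) = (size s == k) && all (fun a => 0 < a <= m) s.
Proof.
elim: k s => [|k IH] s /=; first by rewrite inE; case: s.
apply/allpairsPdep/idP => [[a [v [a_in v_in ->]]]|].
  by move: a_in v_in; rewrite mem_iota IH /= eqSS => a_m /andP[-> ->]; rewrite andbT; lia.
case: s => [|a v] //= /andP[sz /andP[a_m v_m]].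
by exists a, v; rewrite mem_iota IH v_m -eqSS sz; split=> //; lia.
Qed.

Lemma mem_leq_sumn (c : nat) w : c \in w -> c <= sumn w.
Proof. by elim: w => //= d w IH; rewrite inE => /orP[/eqP->|/IH]; lia. Qed.

Lemma mem_compositions_of n w :
  (w \in compositions_of n) = (w != [::]) && (w \in comps n).
Proof.
rewrite mem_undup mem_filter mem_comps /is_composition /csum -/(pos_parts w) -andbA.
case: (boolP (w != [::])) => //= w_nil; case: (boolP (pos_parts w)) => //= pw.
case: eqP => //= sw; apply/flattenP; exists (seqs_len (size w) n).
  by apply: map_f; rewrite mem_iota add1n ltnS -sw size_le_sumn // andbT lt0n size_eq0.
rewrite mem_seqs_len eqxx /=; apply/allP => c c_in.
by rewrite (allP pw) // -sw mem_leq_sumn.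
Qed.

Lemma count_compositions_of (P : pred (seq nat)) n :
  ~~ P [::] -> count P (compositions_of n) = count P (comps n).
Proof.
move=> P_nil; rewrite [RHS](count_split _ (fun w => w != [::])).
rewrite [X in _ + X](@eq_count _ _ pred0) => [|[|? ?] /=];
  rewrite ?count_pred0 ?andbF ?andbT ?(negbTE P_nil) //.
rewrite addn0 -count_filter; apply/permP/uniq_perm.
- exact: undup_uniq.
- exact/filter_uniq/uniq_comps.
by move=> w; rewrite mem_compositions_of mem_filter.
Qed.

Lemma count_nil_comps m : count (pred1 [::]) (comps m) = (m == 0).
Proof. by rewrite count_uniq_mem ?uniq_comps // mem_comps eq_sym. Qed.

Lemma cc_count_first_part n :
  cc_count n = \sum_(a < n) ((n - a.+1 == 0) + ncyclic_after a.+1 (n - a.+1)).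
Proof.
rewrite /cc_count count_compositions_of //; case: n => [|n]; first by rewrite big_ord0.
rewrite count_comps_cons; apply: eq_bigr => a _; rewrite subSS.
rewrite -count_nil_comps /ncyclic_after -count_predUI.
rewrite [X in _ = _ + X](@eq_count _ _ pred0) => [|[|? ?] //=]; last by rewrite eqxx.
rewrite count_pred0 addn0; apply: eq_in_count => w; rewrite mem_comps => /andP[pw _].
rewrite /cyclic_carlitz /is_composition /carlitz /=; rewrite -/(pos_parts w) pw.
by case: w {pw} => [|b w] //=; rewrite (eq_sym (last _ _)).
Qed.

Definition pow2_bounded (c : nat -> nat) : Prop :=
  exists M : nat, forall m, c m <= M * 2 ^ m.

Lemma pow2_bounded_count (P : pred (seq nat)) : pow2_bounded (fun m => count P (comps m)).
Proof. by exists 1 => m; rewrite mul1n count_comps_le. Qed.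

Lemma pow2_bounded_eq0 : pow2_bounded (fun m => m == 0).
Proof. by exists 1 => m; rewrite mul1n; case: (m == 0); rewrite ?expn_gt0. Qed.

Lemma pow2_bounded_add f g :
  pow2_bounded f -> pow2_bounded g -> pow2_bounded (fun m => f m + g m).
Proof. by move=> [M le_f] [N le_g]; exists (M + N) => m; rewrite mulnDl leq_add. Qed.

Lemma pow2_bounded_shift f a :
  pow2_bounded f -> pow2_bounded (fun m => if a <= m then f (m - a) else 0).
Proof.
move=> [M le_f]; exists M => m; case: ifP => // _.
by rewrite (leq_trans (le_f _)) // leq_mul2l leq_pexp2l ?leq_subr ?orbT.
Qed.

(* Imported only now: afterwards [^] on [nat] denotes [Nat.pow] (hence [expn]
   below), and the Stdlib notations would clash with the sequence notations above. *)
From Stdlib Require Import Reals Lra.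
From Coquelicot Require Import Coquelicot.
Open Scope R_scope.

Lemma ex_series_geom_le (a : nat -> R) (M t : R) :
  0 <= t < 1 -> (forall n, Rabs (a n) <= M * t ^ n) -> ex_series a.
Proof.
move=> t01 le_a; apply: (ex_series_le _ (fun n => M * t ^ n)) => //.
by apply/ex_series_scal_l/ex_series_geom; rewrite Rabs_pos_eq; lra.
Qed.

Lemma Rabs_Series_le (a b : nat -> R) :
  (forall n, Rabs (a n) <= b n) -> ex_series b -> Rabs (Series a) <= Series b.
Proof.
move=> le_ab ex_b.
have ex_abs : ex_series (fun n => Rabs (a n)).
  by apply: (ex_series_le _ b) => // n; rewrite /norm /= /abs /= Rabs_Rabsolu.
apply: Rle_trans (Series_Rabs _ ex_abs) (Series_le _ _ _ ex_b) => n.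
by split; [apply: Rabs_pos|].
Qed.

Lemma Series_sum_n (u : nat -> nat -> R) N :
  (forall a, ex_series (u a)) ->
  Series (fun n => sum_n (fun a => u a n) N) = sum_n (fun a => Series (u a)) N.
Proof.
move=> ex_u; elim: N => [|N IH].
  by rewrite sum_O; apply: Series_ext => n; rewrite sum_O.
have ex_partial M : ex_series (fun n => sum_n (fun a => u a n) M).
  elim: M => [|M IHM]; first by apply: ex_series_ext (ex_u 0%nat) => n; rewrite sum_O.
  by apply: ex_series_ext (ex_series_plus _ _ IHM (ex_u M.+1)) => n; rewrite sum_Sn.
rewrite sum_Sn -IH; change (plus ?a ?b) with (a + b); rewrite -Series_plus //.
by apply: Series_ext => n; rewrite sum_Sn.
Qed.

Lemma sum_n_triangular (f : nat -> R) n N :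
  (forall a, (n <= a)%nat -> f a = 0) -> (n <= N)%nat -> sum_n f N = sum_n f n.
Proof.
move=> f0 /subnKC <-; elim: (N - n)%nat => [|k IH]; first by rewrite addn0.
by rewrite addnS sum_Sn IH f0 ?leqW ?leq_addr // plus_zero_r.
Qed.

Lemma Rabs_sum_n_le (f : nat -> R) (B : R) N :
  (forall a, Rabs (f a) <= B) -> Rabs (sum_n f N) <= INR N.+1 * B.
Proof.
move=> le_f; apply: (Rle_trans _ (sum_n_m (fun a => Rabs (f a)) 0 N)).
  exact: (norm_sum_n_m (V := R_NormedModule)).
by rewrite -[N.+1]subn0 -sum_n_m_const; apply: sum_n_m_le.
Qed.

Lemma INR_le_pow2 n : INR n.+1 <= 2 ^ n.
Proof.
elim: n => [|n IH]; first by rewrite /=; lra.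
have := pow_R1_Rle 2 n ltac:(lra).
rewrite S_INR; change (2 ^ n.+1) with (2 * 2 ^ n); lra.
Qed.

Definition pshift (k : nat) (c : nat -> R) (m : nat) : R :=
  if (k <= m)%nat then c (m - k)%nat else 0.

Lemma Series_pshift k c x :
  Series (fun m => pshift k c m * x ^ m) = x ^ k * Series (fun m => c m * x ^ m).
Proof.
rewrite (Series_incr_n_aux _ k) => [|m /ltP lt_mk]; last first.
  by rewrite /pshift leqNgt lt_mk Rmult_0_l.
rewrite -Series_scal_l; apply: Series_ext => m.
by rewrite /pshift leq_addr addKn pow_add; ring.
Qed.

Lemma is_lim_seq_geom_close (s : nat -> R) (l C t : R) :
  0 <= t < 1 -> (forall N, Rabs (l - s N) <= t ^ N.+1 * C) -> is_lim_seq s l.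
Proof.
move=> t01 close.
have geom : is_lim_seq (fun N => t ^ N) 0.
  by apply: is_lim_seq_geom; rewrite Rabs_pos_eq; lra.
have := is_lim_seq_scal_r _ C _ (proj1 (is_lim_seq_incr_1 _ _) geom).
rewrite /= Rmult_0_l => eps.
apply: (is_lim_seq_le_le (fun N => l - t ^ N.+1 * C) _ (fun N => l + t ^ N.+1 * C)).
- by move=> N; have /Rabs_le_between' := close N; lra.
- by have := is_lim_seq_minus' _ _ _ _ (is_lim_seq_const l) eps; rewrite Rminus_0_r.
- by have := is_lim_seq_plus' _ _ _ _ (is_lim_seq_const l) eps; rewrite Rplus_0_r.
Qed.

Section TriangularSwap.

Variables (u : nat -> nat -> R) (M q : R).
Hypotheses (q_ge0 : 0 <= q) (q_small : 2 * q < 1).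
Hypothesis u_le : forall a n, Rabs (u a n) <= M * q ^ n.
Hypothesis u_eq0 : forall a n, (n <= a)%nat -> u a n = 0.

Let t01 : 0 <= 2 * q < 1. Proof. lra. Qed.

Lemma Rabs_column_sum_le n N : Rabs (sum_n (fun a => u a n) N) <= M * (2 * q) ^ n.
Proof.
have Mq0 : 0 <= M * q ^ n by apply: Rle_trans (u_le 0%nat n); apply: Rabs_pos.
suff : Rabs (sum_n (fun a => u a n) N) <= INR n.+1 * (M * q ^ n).
  by have := INR_le_pow2 n; rewrite Rpow_mult_distr; nra.
case: (leqP n N) => [le_nN|lt_Nn].
  by rewrite (sum_n_triangular (u_eq0 ^~ n) le_nN); apply: Rabs_sum_n_le.
apply: Rle_trans (Rabs_sum_n_le N (u_le ^~ n)) _; apply: Rmult_le_compat_r => //.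
by apply/le_INR/leP; rewrite ltnS ltnW.
Qed.

Let ex_row a : ex_series (u a).
Proof. by apply: ex_series_geom_le (u_le a); lra. Qed.

Let ex_column_sum N : ex_series (fun n => sum_n (fun a => u a n) N).
Proof. exact: ex_series_geom_le t01 (Rabs_column_sum_le ^~ N). Qed.

Let diag n := sum_n (fun a => u a n) n.

(* The first [N + 1] rows already account for the columns [n <= N]; every
   later column contributes at most [2 M (2q)^n]. *)
Lemma Rabs_diag_sub_rows_le N :
  Rabs (Series diag - sum_n (fun a => Series (u a)) N) <=
  (2 * q) ^ N.+1 * (2 * M / (1 - 2 * q)).
Proof.
have -> : (2 * q) ^ N.+1 * (2 * M / (1 - 2 * q)) =
    Series (fun n => pshift N.+1 (fun _ => 2 * M) n * (2 * q) ^ n).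
  by rewrite Series_pshift Series_scal_l Series_geom // Rabs_pos_eq; lra.
rewrite -Series_sum_n // -Series_minus //; last first.
  exact: ex_series_geom_le t01 (fun n => Rabs_column_sum_le n n).
apply: Rabs_Series_le => [n|].
  rewrite /pshift /diag; case: (leqP N.+1 n) => [_|]; last rewrite ltnS => le_nN.
    apply: Rle_trans (Rabs_triang _ _) _; rewrite Rabs_Ropp.
    by have := Rabs_column_sum_le n n; have := Rabs_column_sum_le n N; lra.
  by rewrite (sum_n_triangular (u_eq0 ^~ n) le_nN) Rminus_diag Rabs_R0; lra.
apply: (@ex_series_geom_le _ (2 * M) (2 * q)) => // n; rewrite /pshift.
have := pow_le (2 * q) n (proj1 t01); have := Rabs_column_sum_le n n.
have := Rabs_pos (sum_n (fun a => u a n) n).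
by case: ifP => _ ? ? ?; rewrite ?Rmult_0_l ?Rabs_R0 ?Rabs_pos_eq; nra.
Qed.

Lemma is_series_swap_triangular :
  is_series (fun a => Series (u a)) (Series (fun n => sum_n (fun a => u a n) n)).
Proof. exact: is_lim_seq_geom_close t01 Rabs_diag_sub_rows_le. Qed.

End TriangularSwap.

Lemma INR_expn m n : INR (expn m n) = INR m ^ n.
Proof. by elim: n => [|n IH] //; rewrite expnS mult_INR IH. Qed.

Lemma INR_big_ord_sum_n (g : nat -> nat) N :
  INR (\sum_(a < N.+1) g a)%nat = sum_n (fun a => INR (g a)) N.
Proof.
elim: N => [|N IH]; first by rewrite big_ord_recr big_ord0 sum_O.
by rewrite big_ord_recr /= plus_INR IH sum_Sn.
Qed.

Lemma INR_big_ord (f : nat -> nat) n :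
  INR (\sum_(a < n) f a)%nat = sum_n (fun a => if (a < n)%nat then INR (f a) else 0) n.
Proof.
have -> : (\sum_(a < n) f a = \sum_(a < n.+1) if (a < n)%nat then f a else 0)%nat.
  by rewrite big_ord_recr /= ltnn addn0; apply: eq_bigr => a _; rewrite ltn_ord.
by rewrite (INR_big_ord_sum_n (fun a => if (a < n)%nat then f a else 0%nat));
  apply: sum_n_ext => a; case: ifP.
Qed.

Lemma Rabs_coef_pow_le (c M m n : nat) (x : R) :
  (c <= M * expn 2 m)%nat -> (m <= n)%nat ->
  Rabs (INR c * x ^ n) <= INR M * (2 * Rabs x) ^ n.
Proof.
move=> le_c le_mn; rewrite Rabs_mult (Rabs_pos_eq _ (pos_INR c)) -RPow_abs.
rewrite Rpow_mult_distr -Rmult_assoc; apply: Rmult_le_compat_r; first exact/pow_le/Rabs_pos.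
apply: Rle_trans (_ : INR (M * expn 2 m) <= _); first exact/le_INR/leP.
rewrite mult_INR INR_expn; apply: Rmult_le_compat_l; first exact: pos_INR.
by apply: Rle_pow; [rewrite /=; lra|exact/leP].
Qed.

Definition gf (c : nat -> nat) (x : R) : R := Series (fun m => INR (c m) * x ^ m).

Lemma eq_gf f g x : f =1 g -> gf f x = gf g x.
Proof. by move=> fg; apply: Series_ext => m; rewrite fg. Qed.

Lemma ex_series_gf c x : pow2_bounded c -> Rabs x < /2 ->
  ex_series (fun m => INR (c m) * x ^ m).
Proof.
move=> [M le_c] small_x; apply: (@ex_series_geom_le _ (INR M) (2 * Rabs x)).
  by have := Rabs_pos x; lra.
by move=> m; apply: Rabs_coef_pow_le.
Qed.

Lemma gf_add f g x : pow2_bounded f -> pow2_bounded g -> Rabs x < /2 ->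
  gf (fun m => f m + g m)%nat x = gf f x + gf g x.
Proof.
move=> bf bg small_x; rewrite /gf -Series_plus; try exact: ex_series_gf.
by apply: Series_ext => m; rewrite plus_INR; ring.
Qed.

Lemma gf_eq0 x : Rabs x < /2 -> gf (fun m => nat_of_bool (m == 0)%nat) x = 1.
Proof.
move=> small_x; rewrite /gf Series_incr_1; last exact/ex_series_gf/small_x/pow2_bounded_eq0.
rewrite (Series_ext _ (fun k => 0 * x ^ k.+1)) ?Series_scal_l /=; first ring.
by move=> k; rewrite /= Rmult_0_l.
Qed.

Lemma gf_add_shift f a x : pow2_bounded f -> Rabs x < /2 ->
  gf (fun m => f m + if (a <= m)%nat then f (m - a)%nat else 0)%nat x = (1 + x ^ a) * gf f x.
Proof.
move=> bf small_x; rewrite gf_add //; last exact: pow2_bounded_shift.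
have -> : gf (fun m => if (a <= m)%nat then f (m - a)%nat else 0%nat) x = x ^ a * gf f x.
  by rewrite /gf -Series_pshift; apply: Series_ext => m; rewrite /pshift; case: ifP.
by ring.
Qed.

Lemma gf_first_part (c : nat -> nat -> nat) (M : nat) x :
  (forall a m, (c a m <= M * expn 2 m)%nat) -> Rabs x < /4 ->
  is_series (fun a => x ^ a.+1 * gf (c a.+1) x)
            (gf (fun n => \sum_(a < n) c a.+1 (n - a.+1)%nat)%nat x).
Proof.
move=> le_c small_x.
pose u a n := pshift a.+1 (fun m => INR (c a.+1 m)) n * x ^ n.
have le_u a n : Rabs (u a n) <= INR M * (2 * Rabs x) ^ n.
  rewrite /u /pshift; case: ifP => [le_an|_]; first exact/Rabs_coef_pow_le/leq_subr.
  rewrite Rmult_0_l Rabs_R0; apply: Rmult_le_pos; first exact: pos_INR.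
  by apply: pow_le; have := Rabs_pos x; lra.
have u0 a n : (n <= a)%nat -> u a n = 0.
  by move=> le_na; rewrite /u /pshift ltnNge le_na Rmult_0_l.
have [q0 q_lt] : 0 <= 2 * Rabs x /\ 2 * (2 * Rabs x) < 1 by have := Rabs_pos x; lra.
have diag n : sum_n (fun a => u a n) n =
    INR (\sum_(a < n) c a.+1 (n - a.+1)%nat)%nat * x ^ n.
  rewrite (INR_big_ord (fun a => c a.+1 (n - a.+1)%nat)).
  transitivity (mult (sum_n (fun a => pshift a.+1 (fun m => INR (c a.+1 m)) n) n) (x ^ n)).
    exact: sum_n_mult_r.
  by congr (_ * _); apply: sum_n_ext => a; rewrite /pshift; case: ifP.
have := is_series_swap_triangular q0 q_lt le_u u0; rewrite (Series_ext _ _ diag).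
by apply: is_series_ext => a; apply: Series_pshift.
Qed.

Lemma ex_series_comp_pow (f : R -> R) (B x : R) :
  Rabs x < /2 -> (forall y, Rabs y <= /2 -> Rabs (f y) <= B * Rabs y) ->
  ex_series (fun i => f (x ^ i.+1)).
Proof.
move=> small_x le_f; have x0 := Rabs_pos x.
have B0 : 0 <= B.
  have half : Rabs (/2) = /2 by rewrite Rabs_pos_eq; lra.
  have := le_f (/2); rewrite half => /(_ (Rle_refl _)); have := Rabs_pos (f (/2)); lra.
apply: (@ex_series_geom_le _ B (Rabs x)) => [|i]; first lra.
have pow_le1 : Rabs x ^ i <= 1 by rewrite -(pow1 i); apply: pow_incr; lra.
have := pow_le _ i x0; have abs_pow : Rabs (x ^ i.+1) = Rabs x * Rabs x ^ i.
  by rewrite -RPow_abs.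
move=> pow0; apply: Rle_trans (le_f _ _) _; first by rewrite abs_pow; nra.
by apply: Rmult_le_compat_l => //; rewrite abs_pow; nra.
Qed.

Lemma Rabs_div_sq_le y : Rabs y <= /2 -> Rabs (y / (1 + y) ^ 2) <= 4 * Rabs y.
Proof.
move=> small_y; have /Rabs_le_between [lo hi] := small_y.
have d0 : 0 < (1 + y) ^ 2 by apply: pow_lt; lra.
rewrite Rabs_div; last lra.
rewrite (Rabs_pos_eq _ (Rlt_le _ _ d0)); apply/Rle_div_l => //.
have : / 4 <= (1 + y) ^ 2 by rewrite /=; nra.
by rewrite /= Rmult_1_r; have := Rabs_pos y; nra.
Qed.

Lemma Rabs_sq_div_le y : Rabs y <= /2 -> Rabs (y ^ 2 / (1 + y)) <= Rabs y.
Proof.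
move=> small_y; have /Rabs_le_between [lo hi] := small_y.
rewrite Rabs_div; last lra.
rewrite (Rabs_pos_eq (1 + y)); last lra.
apply/Rle_div_l; first lra.
rewrite -RPow_abs /= Rmult_1_r; apply: Rmult_le_compat_l; [exact: Rabs_pos|lra].
Qed.

Lemma pow_double x n : x ^ (2 * n)%nat = (x ^ n) ^ 2.
Proof. by rewrite mulnC pow_mult. Qed.

Section CarlitzGeneratingFunctions.

Variable x : R.
Hypothesis small_x : Rabs x < /4.

Let half_x : Rabs x < /2. Proof. lra. Qed.

Lemma gf_ncarlitz_after a : (0 < a)%nat ->
  (1 + x ^ a) * gf (ncarlitz_after a) x = 1 + gf ncarlitz x.
Proof.
move=> a_gt0; rewrite -gf_add_shift //; last exact: pow2_bounded_count.
rewrite -(gf_eq0 half_x) -gf_add //; [|exact: pow2_bounded_eq0|exact: pow2_bounded_count].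
by apply: eq_gf => m; rewrite ncarlitz_after_rec.
Qed.

Lemma gf_ncyclic_after a : (0 < a)%nat ->
  (1 + x ^ a) * gf (ncyclic_after a) x + 1 = gf (ncarlitz_after a) x.
Proof.
move=> a_gt0; rewrite -gf_add_shift //; last exact: pow2_bounded_count.
rewrite -(gf_eq0 half_x) -gf_add //; last exact: pow2_bounded_eq0.
  by apply: eq_gf => m; rewrite ncyclic_after_rec.
by apply: pow2_bounded_add; [|apply: pow2_bounded_shift]; apply: pow2_bounded_count.
Qed.

Lemma is_series_gf_ncarlitz :
  is_series (fun a => x ^ a.+1 * gf (ncarlitz_after a.+1) x) (gf ncarlitz x).
Proof.
rewrite (eq_gf _ ncarlitz_first_part).
apply: (@gf_first_part ncarlitz_after 1) => // a m.
by rewrite mul1n count_comps_le.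
Qed.

Lemma is_series_gf_cc_count :
  is_series (fun a => x ^ a.+1 * (1 + gf (ncyclic_after a.+1) x)) (gf cc_count x).
Proof.
rewrite (eq_gf _ cc_count_first_part).
apply: (is_series_ext (fun a =>
  x ^ a.+1 * gf (fun m => (m == 0) + ncyclic_after a.+1 m)%nat x)) => [a|].
  rewrite gf_add //; [|exact: pow2_bounded_eq0|exact: pow2_bounded_count].
  by rewrite gf_eq0.
apply: (@gf_first_part (fun a m => (m == 0) + ncyclic_after a m)%nat 2) => // a m.
by rewrite mul2n -addnn leq_add ?count_comps_le //; case: (m == 0)%nat; rewrite ?expn_gt0.
Qed.

Lemma one_plus_pow_neq0 i : 1 + x ^ i.+1 <> 0.
Proof.
have x0 := Rabs_pos x; have pow_le1 : Rabs x ^ i <= 1.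
  by rewrite -(pow1 i); apply: pow_incr; lra.
have : Rabs (x ^ i.+1) < 1 by rewrite -RPow_abs /=; have := pow_le _ i x0; nra.
by move=> /Rabs_def2 [_ lo]; lra.
Qed.

Lemma gf_ncarlitz_after_closed i :
  gf (ncarlitz_after i.+1) x = (1 + gf ncarlitz x) / (1 + x ^ i.+1).
Proof.
rewrite -(gf_ncarlitz_after (ltn0Sn i)); field; exact: one_plus_pow_neq0.
Qed.

Lemma cc_term_closed i :
  x ^ i.+1 * (1 + gf (ncyclic_after i.+1) x) =
  (1 + gf ncarlitz x) * (x ^ i.+1 / (1 + x ^ i.+1) ^ 2)
  + x ^ (2 * i.+1)%nat / (1 + x ^ i.+1).
Proof.
have := gf_ncyclic_after (ltn0Sn i); rewrite gf_ncarlitz_after_closed pow_double.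
have nz := one_plus_pow_neq0 (i := i); move=> /(f_equal (fun y => (y - 1) / (1 + x ^ i.+1))).
rewrite (_ : (_ * _ + 1 - 1) / _ = gf (ncyclic_after i.+1) x); last by field.
by move=> ->; field.
Qed.

Lemma gf_ncarlitz_closed :
  gf ncarlitz x = (1 + gf ncarlitz x) * Series (fun i => x ^ i.+1 / (1 + x ^ i.+1)).
Proof.
rewrite -Series_scal_l -{1}(is_series_unique _ _ is_series_gf_ncarlitz).
apply: Series_ext => i; rewrite gf_ncarlitz_after_closed.
by field; exact: one_plus_pow_neq0.
Qed.

Lemma gf_cc_count_closed :
  gf cc_count x =
  Series (fun i => x ^ i.+1 / (1 + x ^ i.+1) ^ 2)
    / (1 - Series (fun i => x ^ i.+1 / (1 + x ^ i.+1)))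
  + Series (fun i => x ^ (2 * i.+1)%nat / (1 + x ^ i.+1)).
Proof.
have ex_u := @ex_series_comp_pow (fun y => y / (1 + y) ^ 2) 4 x half_x Rabs_div_sq_le.
have ex_v : ex_series (fun i => x ^ (2 * i.+1)%nat / (1 + x ^ i.+1)).
  apply: (ex_series_ext (fun i => (x ^ i.+1) ^ 2 / (1 + x ^ i.+1))) => [i|].
    by rewrite pow_double.
  by apply: (@ex_series_comp_pow (fun y => y ^ 2 / (1 + y)) 1 x half_x) => y /Rabs_sq_div_le; lra.
rewrite -(is_series_unique _ _ is_series_gf_cc_count) (Series_ext _ _ cc_term_closed).
rewrite Series_plus ?Series_scal_l //; last exact: ex_series_scal_l.
have := gf_ncarlitz_closed.
set C := gf ncarlitz x; set G := Series _ => C_eq.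
have KG : (1 + C) * (1 - G) = 1 by rewrite Rmult_minus_distr_l Rmult_1_r -C_eq; ring.
have nz : 1 - G <> 0 by move=> G1; rewrite G1 Rmult_0_r in KG; lra.
have -> : 1 + C = / (1 - G) by apply: (Rmult_eq_reg_r (1 - G)) => //; rewrite KG Rinv_l.
by rewrite /Rdiv Rmult_comm.
Qed.

End CarlitzGeneratingFunctions.

Theorem corollary5p4 :
  exists r : R, (0 < r)%R /\
  forall x : R, (Rabs x < r)%R ->
    ex_series (cc_gf_term x) /\
    Series (cc_gf_term x) =
      (Series (fun i => x ^ i.+1 / (1 + x ^ i.+1) ^ 2)
         / (1 - Series (fun i => x ^ i.+1 / (1 + x ^ i.+1)))
       + Series (fun i => x ^ (2 * i.+1) / (1 + x ^ i.+1)))%R.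
Proof.
exists (/4); split; first lra.
move=> x small_x; split; last exact: gf_cc_count_closed.
apply: ex_series_gf; last lra.
by exists 1%nat => m; rewrite /cc_count count_compositions_of // mul1n count_comps_le.
Qed.
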